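(* Let $G$ and $K$ be convex bodies in $\mathbb{R}^d$ with $O\in\operatorname{int}(G)$ and $G\subset\operatorname{int}(K)$. Let $\alpha>0$ and $G_+:=\{y\in\operatorname{int}(K):\inf_{g\in G}d_K(y,g)\le\alpha\}$. Then for all $p,x\in K^\circ$, $$d_{(G_+)^\circ}(p,x)\le d_{G^\circ}(p,x)+2\alpha.$$ In particular, if $d_{G^\circ}(p,x)\le\alpha$ then $d_{(G_+)^\circ}(p,x)\le3\alpha$.
   Context: Polar $X^\circ=\{y:\langle w,y\rangle\le1\ \forall w\in X\}$. For a convex body $E$ and distinct $u,v\in\operatorname{int}(E)$, let $v'$ (resp. $u'$) be where the ray from $u$ through $v$ (resp. from $v$ through $u$) meets $\partial E$; the Hilbert distance is $d_E(u,v)=\frac12\ln\left(\frac{\|v-u'\|}{\|u-u'\|}\frac{\|u-v'\|}{\|v-v'\|}\right)$, $d_E(u,u)=0$. *)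

From HB Require Import structures.
From mathcomp Require Import all_boot all_order all_algebra.
From mathcomp Require Import all_classical all_reals all_analysis.
Set Implicit Arguments. Unset Strict Implicit. Unset Printing Implicit Defensive.
Import Order.TTheory GRing.Theory Num.Theory.
Import numFieldNormedType.Exports.
Local Open Scope classical_set_scope.
Local Open Scope ring_scope.

Section Defs.
Variables (R : realType) (d : nat).
Local Notation V := 'rV[R]_d.

Definition dotp (w y : V) : R := \sum_(i < d) w ord0 i * y ord0 i.

Definition enorm (x : V) : R := Num.sqrt (dotp x x).

Definition convex_set (E : set V) : Prop :=
  forall x y, E x -> E y -> forall t : R, 0 <= t -> t <= 1 ->
    E (t *: x + (1 - t) *: y).

Definition convex_body (E : set V) : Prop :=
  convex_set E /\ compact E /\ (interior E !=set0).

Definition polar (X : set V) : set V :=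
  [set y | forall w, X w -> dotp w y <= 1].

Definition bdry (E : set V) : set V := closure E `\` interior E.

Definition ray_exit (E : set V) (u v : V) : V :=
  xget u [set w | exists t : R, 0 <= t /\ w = u + t *: (v - u) /\ bdry E w].

Definition hilbert_dist (E : set V) (u v : V) : R :=
  if u == v then 0 else
  let v' := ray_exit E u v in
  let u' := ray_exit E v u in
  (ln ((enorm (v - u') / enorm (u - u')) * (enorm (u - v') / enorm (v - v'))))
  / 2.

End Defs.

(* For w, g in the interior of K, the points where the chord through w and g
   leaves K give, for every q in the polar of K, the slack comparisons
   1 - <g,q> <= r1 (1 - <w,q>) and 1 - <w,q> <= r2 (1 - <g,q>) with
   r1 r2 = exp (2 d_K(w,g)).  On the dual side, if X is bounded and contains a
   ball around 0, the chord from p through x leaves the polar of X at parameter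
   1 / (1 - m(p,x)), where m(p,x) is the infimum over w in X of
   (1 - <w,x>) / (1 - <w,p>); hence d_{X°}(p,x) = -(ln m(p,x) + ln m(x,p)) / 2.
   Since every point of G_+ is at Hilbert distance at most alpha from G (as an
   infimum), the slack comparisons give m_{G_+} >= exp(-2 alpha) m_G in both
   directions, which is the claim. *)

From Pilot Require Import Defs.
From HB Require Import structures.
From mathcomp Require Import all_boot all_order all_algebra.
From mathcomp Require Import all_classical all_reals all_analysis.
From mathcomp Require Import ring lra.
Import Order.TTheory GRing.Theory Num.Theory.
Import numFieldNormedType.Exports.
Local Open Scope classical_set_scope.
Local Open Scope ring_scope.

Set Implicit Arguments.
Unset Strict Implicit.
Unset Printing Implicit Defensive.

Section Dotp.
Variables (R : realType) (d : nat).
Local Notation V := 'rV[R]_d.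
Implicit Types (w y z : V).

Lemma dotpC w y : dotp w y = dotp y w.
Proof. by apply: eq_bigr => i _; rewrite mulrC. Qed.

Lemma dotpDr w y z : dotp w (y + z) = dotp w y + dotp w z.
Proof. by rewrite /dotp -big_split; apply: eq_bigr => i _; rewrite mxE mulrDr. Qed.

Lemma dotpZr w c y : dotp w (c *: y) = c * dotp w y.
Proof. by rewrite /dotp mulr_sumr; apply: eq_bigr => i _; rewrite mxE mulrCA. Qed.

Lemma dotpBr w y z : dotp w (y - z) = dotp w y - dotp w z.
Proof. by rewrite dotpDr -scaleN1r dotpZr mulN1r. Qed.

Lemma dotpDl w y z : dotp (y + z) w = dotp y w + dotp z w.
Proof. by rewrite !(dotpC _ w) dotpDr. Qed.

Lemma dotpZl w c y : dotp (c *: y) w = c * dotp y w.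
Proof. by rewrite !(dotpC _ w) dotpZr. Qed.

Lemma dotpBl w y z : dotp (y - z) w = dotp y w - dotp z w.
Proof. by rewrite !(dotpC _ w) dotpBr. Qed.

Lemma dotp0r w : dotp w 0 = 0.
Proof. by rewrite -(scale0r 0) dotpZr mul0r. Qed.

Lemma dotp_gt0 y : y != 0 -> 0 < dotp y y.
Proof.
move=> y0; have sq_ge0 i : 0 <= y ord0 i * y ord0 i by rewrite -expr2 sqr_ge0.
rewrite lt_def sumr_ge0 ?andbT //; apply: contra y0 => /eqP/psumr_eq0P y2_0.
apply/eqP/rowP => i; rewrite mxE; apply/eqP.
by rewrite -sqrf_eq0 expr2 y2_0.
Qed.

Lemma normr_coord_le y i : `|y ord0 i| <= `|y|.
Proof. by rewrite [`|y|]mx_normrE; apply/bigmax_geP; right; exists (ord0, i). Qed.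

Lemma norm_dotp_le w y : `|dotp w y| <= (\sum_i `|w ord0 i|) * `|y|.
Proof.
rewrite mulr_suml; apply: le_trans (ler_norm_sum _ _ _) _.
by apply: ler_sum => i _; rewrite normrM ler_wpM2l ?normr_coord_le.
Qed.

Lemma dotp_continuous w : continuous (dotp w).
Proof.
move=> y; apply/(@cvgrPdist_lt _ _ _ (nbhs y) (nbhs_filter y)) => e e0.
set C := \sum_i `|w ord0 i| + 1.
have C0 : 0 < C by rewrite ltr_wpDl // sumr_ge0.
apply/nbhs_ballP; exists (e / C); first by rewrite /= divr_gt0.
move=> z; rewrite -ball_normE /= => yz.
rewrite -dotpBr; apply: le_lt_trans (norm_dotp_le _ _) _.
apply: (@le_lt_trans _ _ (C * `|y - z|)); last by rewrite mulrC -ltr_pdivlMr.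
by rewrite ler_wpM2r // lerDl.
Qed.

Lemma enormZ c y : enorm (c *: y) = `|c| * enorm y.
Proof. by rewrite /enorm dotpZr dotpZl mulrA -expr2 sqrtrM ?sqr_ge0 // sqrtr_sqr. Qed.

Lemma enorm_gt0 y : y != 0 -> 0 < enorm y.
Proof. by move=> y0; rewrite sqrtr_gt0 dotp_gt0. Qed.

End Dotp.

Section Rays.
Variables (R : realType) (d : nat).
Local Notation V := 'rV[R]_d.
Implicit Types (E : set V) (u v y : V).

Lemma interiorP E y :
  interior E y <-> exists2 e : R, 0 < e & forall z, `|y - z| < e -> E z.
Proof.
split.
  by move=> /nbhs_ballP [e e0 H]; exists e => // z yz; apply: H; rewrite -ball_normE.
by move=> [e e0 H]; apply/nbhs_ballP; exists e => // z; rewrite -ball_normE; apply: H.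
Qed.

Lemma interior_step E y u : interior E y -> exists2 eta : R, 0 < eta & E (y + eta *: u).
Proof.
move=> /interiorP [e e0 He]; have u1 : 0 < `|u| + 1 by rewrite ltr_wpDl.
exists (e / (2 * (`|u| + 1))); first by rewrite divr_gt0 // mulr_gt0.
apply: He; rewrite opprD addNKr normrN normrZ gtr0_norm ?divr_gt0 ?mulr_gt0 //.
rewrite mulrAC ltr_pdivrMr ?mulr_gt0 //; nra.
Qed.

Lemma closed_polar E : closed (polar E).
Proof.
have -> : polar E = \bigcap_(w in E) (dotp w @^-1` [set s | s <= 1]).
  by apply/seteqP; split => y Hy w Ew; exact: Hy.
apply: closed_bigI => w _; apply: preimage_closed; last exact: closed_le.
by move=> y _; exact: dotp_continuous.
Qed.

Lemma ray_bdry_exists E a u : compact E -> E a -> u != 0 ->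
  exists2 t, 0 <= t & bdry E (a + t *: u).
Proof.
move=> cE Ea u0; have u_gt0 : 0 < `|u| by rewrite normr_gt0.
have [M [_ HM]] := compact_bounded cE.
set A := [set t : R | 0 <= t /\ E (a + t *: u)].
have A0 : A 0 by split; rewrite // scale0r addr0.
have A_ub t : A t -> t <= (`|M| + 1 + `|a|) / `|u|.
  move=> [t0 Et]; rewrite ler_pdivlMr // -(ger0_norm t0) -normrZ.
  have := HM (`|M| + 1) (ltr_pwDr ltr01 (ler_norm M)) _ Et.
  have := ler_normB (a + t *: u) a; rewrite addrAC subrr add0r /=; lra.
have supA : has_sup A by split; [exists 0 | exists ((`|M| + 1 + `|a|) / `|u|) => t /A_ub].
set T := sup A; have T0 : 0 <= T := sup_upper_bound supA A0.
exists T => //; split.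
- move=> B /nbhs_ballP [e e0 Hb].
  have [t At Tt] := sup_adherent (divr_gt0 e0 u_gt0) supA.
  exists (a + t *: u); split; first by case: At.
  apply: Hb; rewrite -ball_normE /=; have tT : t <= T := sup_upper_bound supA At.
  rewrite opprD addrACA subrr add0r -scalerBl normrZ ger0_norm ?subr_ge0 //.
  by rewrite -ltr_pdivlMr //; rewrite -/T in Tt; lra.
- move=> /(interior_step u) [eta eta0 Eeta].
  have : A (T + eta) by split; [lra | rewrite scalerDl addrA].
  by move/(sup_upper_bound supA); rewrite -/T; lra.
Qed.

Lemma ray_exitP E u v : compact E -> E u -> u != v ->
  exists2 t, 0 <= t & ray_exit E u v = u + t *: (v - u) /\ bdry E (ray_exit E u v).
Proof.
move=> cE Eu uv; have vu : v - u != 0 by rewrite subr_eq0 eq_sym.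
have [t t0 bt] := ray_bdry_exists cE Eu vu.
have ex : exists w,
    [set w | exists t, 0 <= t /\ w = u + t *: (v - u) /\ bdry E w] w.
  by exists (u + t *: (v - u)), t.
by have [s [s0 [eq_s bs]]] := xgetPex u ex; exists s.
Qed.

Lemma ray_exit_unique E u v T : 0 <= T -> bdry E (u + T *: (v - u)) ->
  (forall t, 0 <= t -> bdry E (u + t *: (v - u)) -> t = T) ->
  ray_exit E u v = u + T *: (v - u).
Proof.
move=> T0 bT uniq; apply: xget_unique; first by exists T.
by move=> _ [t [t0 [-> bt]]]; rewrite (uniq t).
Qed.

(* [Defs.] is needed: all_analysis also exports a [convex_set]. *)
Lemma interior_convex_segment E a b t : Defs.convex_set E -> interior E a ->
  interior E b -> 0 <= t -> t <= 1 -> interior E (a + t *: (b - a)).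
Proof.
move=> cE /interiorP [ea ea0 Ha] /interiorP [eb eb0 Hb] t0 t1.
apply/interiorP; exists (Num.min ea eb); first by rewrite lt_min ea0 eb0.
move=> y; rewrite lt_min => /andP [ya yb]; set h := y - (a + t *: (b - a)).
have -> : y = t *: (b + h) + (1 - t) *: (a + h) by apply/rowP => i; rewrite /h !mxE; ring.
by apply: (cE (b + h) (a + h) _ _ t t0 t1); [apply: Hb | apply: Ha];
  rewrite opprD addNKr normrN /h distrC.
Qed.

Lemma ray_exit_convex E a b : Defs.convex_set E -> compact E -> interior E a ->
  interior E b -> a != b ->
  exists2 t, 1 < t & ray_exit E a b = a + t *: (b - a) /\ E (ray_exit E a b).
Proof.
move=> cvE cE ia ib ab; have clE := compact_closed (@norm_hausdorff _ _) cE.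
have [t t0 [eq_t [clt nit]]] := ray_exitP cE (interior_subset ia) ab.
exists t; last by split=> //; exact: clE.
rewrite ltNge; apply/negP => t1; apply: nit.
by rewrite eq_t; exact: interior_convex_segment.
Qed.

End Rays.

Section HilbertSlack.
Variables (R : realType) (d : nat).
Local Notation V := 'rV[R]_d.
Implicit Types (E K : set V) (u v w g p q x : V).

Lemma hilbert_distE E u v s t : u != v -> 1 < s -> 1 < t ->
  ray_exit E u v = u + t *: (v - u) -> ray_exit E v u = v + s *: (u - v) ->
  hilbert_dist E u v = ln (s / (s - 1) * (t / (t - 1))) / 2.
Proof.
move=> uv s1 t1 ev eu.
have exitD (a b : V) c : a - (a + c *: (b - a)) = (- c) *: (b - a).
  by apply/rowP => i; rewrite !mxE; ring.
have exitB (a b : V) c : b - (a + c *: (b - a)) = (1 - c) *: (b - a).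
  by apply/rowP => i; rewrite !mxE; ring.
have ratio (c n : R) : 1 < c -> 0 < n -> `|- c| * n / (`|1 - c| * n) = c / (c - 1).
  move=> c1 n0; rewrite normrN gtr0_norm ?(lt_trans ltr01) // ltr0_norm ?subr_lt0 //.
  by rewrite opprB; field; rewrite !gt_eqF ?subr_gt0.
have n_gt0 (a b : V) : a != b -> 0 < enorm (a - b).
  by move=> ab; rewrite enorm_gt0 ?subr_eq0.
rewrite /hilbert_dist (negbTE uv) /= ev eu exitD exitB exitD exitB !enormZ.
by rewrite !ratio ?n_gt0 // eq_sym.
Qed.

Lemma hilbert_dist_slack K w g : Defs.convex_set K -> compact K ->
  interior K w -> interior K g ->
  exists r1 r2 : R, [/\ 1 <= r1, 1 <= r2, r1 * r2 = expR (2 * hilbert_dist K w g) &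
    forall q, polar K q ->
      1 - dotp g q <= r1 * (1 - dotp w q) /\ 1 - dotp w q <= r2 * (1 - dotp g q)].
Proof.
move=> cvK cK iw ig; have [<-|wg] := eqVneq w g.
  exists 1, 1; rewrite /hilbert_dist eqxx mulr0 expR0 mulr1.
  by split => // q _; rewrite !mul1r.
have [t t1 [et Kt]] := ray_exit_convex cvK cK iw ig wg.
have gw : g != w by rewrite eq_sym.
have [s s1 [es Ks]] := ray_exit_convex cvK cK ig iw gw.
have r_ge1 (c : R) : 1 < c -> 1 <= c / (c - 1).
  by move=> c1; rewrite ler_pdivlMr ?subr_gt0 //; lra.
exists (s / (s - 1)), (t / (t - 1)); split; rewrite ?r_ge1 //.
  rewrite (hilbert_distE wg s1 t1 et es) [2 * _]mulrC divfK ?pnatr_eq0 // lnK // posrE.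
  by rewrite mulr_gt0 // divr_gt0 ?subr_gt0 ?(lt_trans ltr01).
move=> q Kq; have := Kq _ Ks; have := Kq _ Kt.
rewrite et es !dotpDl !dotpZl !dotpBl => ht hs.
by split; rewrite mulrAC ler_pdivlMr ?subr_gt0 //; nra.
Qed.

Lemma hilbert_dist_ge0 K w g : Defs.convex_set K -> compact K ->
  interior K w -> interior K g -> 0 <= hilbert_dist K w g.
Proof.
move=> cvK cK iw ig.
have [r1 [r2 [r1_ge1 r2_ge1 Er _]]] := hilbert_dist_slack cvK cK iw ig.
have : expR 0 <= expR (2 * hilbert_dist K w g) by rewrite -Er expR0; nra.
by rewrite ler_expR; lra.
Qed.

Lemma interior_polar_dotp_lt1 K g q : interior K g -> polar K q -> dotp g q < 1.
Proof.
move=> /(interior_step q) [eta eta0 Kq] Kpol; have := Kpol _ Kq.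
have [->|q0] := eqVneq q 0; first by rewrite !dotp0r ltr01.
by rewrite dotpDl dotpZl; have := mulr_gt0 eta0 (dotp_gt0 q0); lra.
Qed.

Lemma slack_le_expR_hilbert K w g q : Defs.convex_set K -> compact K ->
  interior K w -> interior K g -> polar K q ->
  1 - dotp g q <= expR (2 * hilbert_dist K w g) * (1 - dotp w q).
Proof.
move=> cvK cK iw ig Kq; have := interior_polar_dotp_lt1 iw Kq.
have [r1 [r2 [r1_ge1 r2_ge1 <- /(_ q Kq) [hg _]]]] := hilbert_dist_slack cvK cK iw ig.
move=> wq; apply: le_trans hg _; rewrite -mulrA ler_wpM2l ?ler_peMl //; lra.
Qed.

Definition slack_ratio p x w : R := (1 - dotp w x) / (1 - dotp w p).

Definition inf_slack_ratio (X : set V) p x : R :=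
  inf [set slack_ratio p x w | w in X].

Lemma slack_ratio_le_expR_hilbert K w g p x : Defs.convex_set K -> compact K ->
  interior K w -> interior K g -> polar K p -> polar K x ->
  slack_ratio p x g <= expR (2 * hilbert_dist K w g) * slack_ratio p x w.
Proof.
move=> cvK cK iw ig Kp Kx.
have [r1 [r2 [r1_ge1 r2_ge1 <- H]]] := hilbert_dist_slack cvK cK iw ig.
have [[_ hp] [hx _]] := (H p Kp, H x Kx).
have wp := interior_polar_dotp_lt1 iw Kp; have gp := interior_polar_dotp_lt1 ig Kp.
have gx := interior_polar_dotp_lt1 ig Kx; rewrite /slack_ratio.
rewrite ler_pdivrMr ?subr_gt0 // -subr_ge0.
have -> : r1 * r2 * ((1 - dotp w x) / (1 - dotp w p)) * (1 - dotp g p) - (1 - dotp g x)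
    = ((r1 * (1 - dotp w x)) * (r2 * (1 - dotp g p)) - (1 - dotp g x) * (1 - dotp w p))
      / (1 - dotp w p).
  by field; rewrite gt_eqF ?subr_gt0.
apply: divr_ge0; last by rewrite subr_ge0 ltW.
by rewrite subr_ge0 ler_pM // subr_ge0 ltW.
Qed.

End HilbertSlack.

Section PolarRay.
Variables (R : realType) (d : nat).
Local Notation V := 'rV[R]_d.
Variables (X : set V) (B r : R).
Hypotheses (B_gt0 : 0 < B) (dotp_le : forall w y, X w -> `|dotp w y| <= B * `|y|).
Hypotheses (r_gt0 : 0 < r) (ball_sub : forall w, `|w| < r -> X w).

Lemma polar_interior y dl : 0 < dl -> (forall w, X w -> dl <= 1 - dotp w y) ->
  interior (polar X) y.
Proof.
move=> dl0 Hdl; apply/interiorP; exists (dl / B); first exact: divr_gt0.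
move=> z; rewrite ltr_pdivlMr // => yz w Xw.
have := dotp_le (y - z) Xw; have := Hdl w Xw.
by rewrite dotpBr ler_norml => h /andP[h1 _]; lra.
Qed.

Section Ray.
Variables (p x : V) (dp dx : R).
Hypotheses (dp_gt0 : 0 < dp) (slack_p : forall w, X w -> dp <= 1 - dotp w p).
Hypotheses (dx_gt0 : 0 < dx) (slack_x : forall w, X w -> dx <= 1 - dotp w x).
Hypothesis p_neq_x : p != x.

Local Notation m := (inf_slack_ratio X p x).
Local Notation S := [set slack_ratio p x w | w in X].

Let X0 : X 0. Proof. by apply: ball_sub; rewrite normr0. Qed.

Let slack_p_gt0 w : X w -> 0 < 1 - dotp w p.
Proof. by move=> Xw; apply: lt_le_trans (slack_p Xw). Qed.

Lemma slack_ratio_lb w : X w -> dx / (1 + B * `|p|) <= slack_ratio p x w.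
Proof.
move=> Xw; have := dotp_le p Xw; rewrite ler_norml => /andP[h _].
have := slack_p_gt0 Xw; have := slack_x Xw; have := normr_ge0 p => p0 hx hp.
have Bp : 0 < 1 + B * `|p| by rewrite ltr_wpDr ?mulr_ge0 // ltW.
rewrite /slack_ratio ler_pdivlMr // mulrAC ler_pdivrMr //.
by apply: ler_pM; [exact: ltW | lra..].
Qed.

Lemma inf_slack_ratio_gt0 : 0 < m.
Proof.
apply: lt_le_trans (lb_le_inf _ _); last by move=> _ [w Xw <-]; exact: slack_ratio_lb.
  by rewrite divr_gt0 // ltr_wpDr ?mulr_ge0 // ltW.
by exists (slack_ratio p x 0), 0.
Qed.

Lemma has_inf_slack_ratio : has_inf S.
Proof.
split; first by exists (slack_ratio p x 0), 0.
by exists (dx / (1 + B * `|p|)) => _ [v Xv <-]; exact: slack_ratio_lb.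
Qed.

Lemma inf_slack_ratio_le w : X w -> m <= slack_ratio p x w.
Proof. by move=> Xw; apply: (ge_inf has_inf_slack_ratio.2); exists w. Qed.

Lemma inf_slack_ratio_lt1 : m < 1.
Proof.
have xp : x - p != 0 by rewrite subr_eq0 eq_sym.
set c := r / (2 * `|x - p|); have c0 : 0 < c by rewrite divr_gt0 ?mulr_gt0 ?normr_gt0.
have Xc : X (c *: (x - p)).
  apply: ball_sub; rewrite normrZ gtr0_norm //.
  have -> : c * `|x - p| = r / 2 by rewrite /c; field; rewrite normr_eq0.
  by rewrite ltr_pdivrMr // ltr_pMr // ltr1n.
apply: le_lt_trans (inf_slack_ratio_le Xc) _.
rewrite /slack_ratio ltr_pdivrMr ?slack_p_gt0 // mul1r.
by have := mulr_gt0 c0 (dotp_gt0 xp); rewrite -dotpZl dotpBr; lra.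
Qed.

Lemma slack_ray w t : X w ->
  1 - dotp w (p + t *: (x - p)) = (1 - dotp w p) * (1 - t + t * slack_ratio p x w).
Proof.
move=> Xw; rewrite /slack_ratio dotpDr dotpZr dotpBr.
by field; rewrite gt_eqF ?slack_p_gt0.
Qed.

Lemma polar_ray t : 0 <= t -> polar X (p + t *: (x - p)) <-> t <= (1 - m)^-1.
Proof.
move=> t0; have m1 := inf_slack_ratio_lt1.
rewrite -[X in _ <= X]div1r ler_pdivlMr ?subr_gt0 //; split; last first.
  move=> tm w Xw; rewrite -subr_ge0 slack_ray //.
  apply: mulr_ge0; first exact/ltW/slack_p_gt0.
  by have := inf_slack_ratio_le Xw; nra.
move=> Pz; rewrite leNgt; apply/negP => tm.
have t_gt0 : 0 < t.
  by rewrite lt_def t0 andbT; apply: contraTneq tm => ->; rewrite mul0r ltr10.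
set eps := (t * (1 - m) - 1) / t; have eps0 : 0 < eps by rewrite divr_gt0 ?subr_gt0.
have [_ [w Xw <-] wm] := inf_adherent eps0 has_inf_slack_ratio.
have : 1 - t + t * slack_ratio p x w < 0.
  have -> : 0 = 1 - t + t * (m + eps) by rewrite /eps; field; rewrite gt_eqF.
  by rewrite ltrD2l ltr_pM2l.
rewrite -(pmulr_rlt0 _ (slack_p_gt0 Xw)) -slack_ray // subr_lt0 ltNge.
by rewrite Pz.
Qed.

Lemma interior_polar_ray t : 0 <= t -> t < (1 - m)^-1 ->
  interior (polar X) (p + t *: (x - p)).
Proof.
move=> t0; have m1 := inf_slack_ratio_lt1.
rewrite -[X in _ < X]div1r ltr_pdivlMr ?subr_gt0 // => tm.
apply: (@polar_interior _ (dp * (1 - t * (1 - m)))); first by rewrite mulr_gt0 ?subr_gt0.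
move=> w Xw; rewrite slack_ray //.
apply: ler_pM; [exact: ltW | by rewrite subr_ge0 ltW | exact: slack_p |].
by have := inf_slack_ratio_le Xw; nra.
Qed.

Lemma ray_exit_polar : ray_exit (polar X) p x = p + (1 - m)^-1 *: (x - p).
Proof.
set T := (1 - m)^-1.
have T0 : 0 <= T by rewrite invr_ge0 subr_ge0 ltW ?inf_slack_ratio_lt1.
apply: ray_exit_unique => //.
  split; first by apply: subset_closure; apply/polar_ray.
  move=> /(interior_step (x - p)) [eta eta0]; rewrite -addrA -scalerDl.
  by move/(polar_ray (addr_ge0 T0 (ltW eta0))); rewrite -/T; lra.
move=> t t0 [clt nit]; have [tT|Tt|//] := ltgtP t T.
  by case: nit; apply: interior_polar_ray.
by move: clt => /closed_polar /(polar_ray t0); rewrite -/T; lra.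
Qed.

End Ray.

Lemma hilbert_dist_polar p x (dp dx : R) :
  0 < dp -> (forall w, X w -> dp <= 1 - dotp w p) ->
  0 < dx -> (forall w, X w -> dx <= 1 - dotp w x) -> p != x ->
  hilbert_dist (polar X) p x =
    - (ln (inf_slack_ratio X p x) + ln (inf_slack_ratio X x p)) / 2.
Proof.
move=> dp0 Hp dx0 Hx px; have xp : x != p by rewrite eq_sym.
have exit_ratio (c : R) : 0 < c -> c < 1 ->
    1 < (1 - c)^-1 /\ (1 - c)^-1 / ((1 - c)^-1 - 1) = c^-1.
  move=> c0 c1; have c1' : 0 < 1 - c by rewrite subr_gt0.
  split; first by rewrite invf_gt1 //; lra.
  by field; rewrite !gt_eqF.
have mpx := inf_slack_ratio_gt0 dp0 Hp dx0 Hx.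
have mxp := inf_slack_ratio_gt0 dx0 Hx dp0 Hp.
have [t1 Et] := exit_ratio _ mpx (inf_slack_ratio_lt1 dp0 Hp dx0 Hx px).
have [s1 Es] := exit_ratio _ mxp (inf_slack_ratio_lt1 dx0 Hx dp0 Hp xp).
rewrite (hilbert_distE px s1 t1 (ray_exit_polar dp0 Hp dx0 Hx px)
  (ray_exit_polar dx0 Hx dp0 Hp xp)) Es Et.
by rewrite lnM ?posrE ?invr_gt0 // !lnV ?posrE // opprD addrC.
Qed.

End PolarRay.

Section CompactPolar.
Variables (R : realType) (d : nat).
Local Notation V := 'rV[R]_d.

Lemma compact_dotp_bounded (K : set V) : compact K ->
  exists2 B : R, 0 < B & forall w y, K w -> `|dotp w y| <= B * `|y|.
Proof.
move=> cK; have [M [_ HM]] := compact_bounded cK.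
have KM w : K w -> `|w| <= `|M| + 1.
  by move=> Kw; apply: HM Kw; rewrite ltr_pwDr ?ler_norm.
exists (\sum_(i < d) (`|M| + 1) + 1); first by rewrite ltr_wpDl // sumr_ge0.
move=> w y Kw; apply: le_trans (norm_dotp_le _ _) _; rewrite ler_wpM2r // ler_wpDr //.
by apply: ler_sum => i _; apply: le_trans (normr_coord_le _ _) (KM _ Kw).
Qed.

Lemma compact_slack_lb (G K : set V) q : G !=set0 -> compact G ->
  G `<=` interior K -> polar K q ->
  exists2 dl : R, 0 < dl & forall g, G g -> dl <= 1 - dotp g q.
Proof.
move=> G0 cG GK Kq.
have [c /set_mem Gc max_c] :=
  EVT_max_rV G0 cG (continuous_subspaceT (@dotp_continuous _ _ q)).
exists (1 - dotp c q); first by rewrite subr_gt0 (interior_polar_dotp_lt1 (GK _ Gc)).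
by move=> g Gg; rewrite lerD2l lerN2 !(dotpC _ q) max_c ?inE.
Qed.

End CompactPolar.

Definition hilbert_nbhd (R : realType) (d : nat) (K G : set 'rV[R]_d) (alpha : R) :
  set 'rV[R]_d :=
  [set y | interior K y /\ inf [set hilbert_dist K y g | g in G] <= alpha].

Section HilbertNbhd.
Variables (R : realType) (d : nat).
Local Notation V := 'rV[R]_d.
Variables (K G : set V) (alpha : R).
Hypotheses (cvK : Defs.convex_set K) (cK : compact K).
Hypotheses (G0 : G !=set0) (GK : G `<=` interior K).
Local Notation Gplus := (hilbert_nbhd K G alpha).

Lemma le_expR_hilbert_nbhd w c : Gplus w ->
  (forall g, G g -> c <= expR (2 * hilbert_dist K w g)) -> c <= expR (2 * alpha).
Proof.
(* The infimum need not be attained, so [ln c / 2] is used as a lower bound. *)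
move=> [_ w_alpha] Hc; have [c_le0|c_gt0] := lerP c 0.
  by rewrite (le_trans c_le0) ?ltW ?expR_gt0.
have : ln c / 2 <= inf [set hilbert_dist K w g | g in G].
  apply: lb_le_inf; first by case: G0 => g Gg; exists (hilbert_dist K w g), g.
  move=> _ [g Gg <-]; rewrite ler_pdivrMr // mulrC -ler_expR lnK ?posrE //.
  exact: Hc.
have c_pos : c \in Num.pos by rewrite posrE.
by move=> h; rewrite -(lnK c_pos) ler_expR; lra.
Qed.

Lemma sub_hilbert_nbhd : 0 <= alpha -> G `<=` Gplus.
Proof.
move=> a0 g Gg; split; first exact: GK.
apply: le_trans a0; apply: (@le_trans _ _ (hilbert_dist K g g)).
  apply: ge_inf; last by exists g.
  by exists 0 => _ [h Gh <-]; exact: hilbert_dist_ge0 (GK Gg) (GK Gh).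
by rewrite /hilbert_dist eqxx.
Qed.

Lemma hilbert_nbhd_slack q (dq : R) : polar K q ->
  (forall g, G g -> dq <= 1 - dotp g q) ->
  forall w, Gplus w -> expR (- (2 * alpha)) * dq <= 1 - dotp w q.
Proof.
move=> Kq Hdq w Gw; have [iw _] := Gw.
have sw : 0 < 1 - dotp w q by rewrite subr_gt0 (interior_polar_dotp_lt1 iw).
rewrite expRN mulrC ler_pdivrMr ?expR_gt0 // mulrC -ler_pdivrMr //.
apply: le_expR_hilbert_nbhd Gw _ => g Gg; rewrite ler_pdivrMr //.
exact: le_trans (Hdq g Gg) (slack_le_expR_hilbert cvK cK iw (GK Gg) Kq).
Qed.

Lemma inf_slack_ratio_hilbert_nbhd p x : 0 <= alpha -> polar K p -> polar K x ->
  expR (- (2 * alpha)) * inf_slack_ratio G p x <= inf_slack_ratio Gplus p x.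
Proof.
move=> a0 Kp Kx.
have ratio_gt0 v : interior K v -> 0 < slack_ratio p x v.
  by move=> iv; rewrite divr_gt0 // subr_gt0 (interior_polar_dotp_lt1 iv).
apply: lb_le_inf.
  by case: G0 => g Gg; exists (slack_ratio p x g), g; first exact: sub_hilbert_nbhd.
move=> _ [w Gw <-]; have [iw _] := Gw.
rewrite expRN mulrC ler_pdivrMr ?expR_gt0 // mulrC -ler_pdivrMr ?ratio_gt0 //.
apply: le_expR_hilbert_nbhd Gw _ => g Gg; rewrite ler_pdivrMr ?ratio_gt0 //.
apply: le_trans (slack_ratio_le_expR_hilbert cvK cK iw (GK Gg) Kp Kx).
apply: ge_inf; last by exists g.
by exists 0 => _ [h Gh <-]; exact/ltW/ratio_gt0/GK.
Qed.

Lemma hilbert_dist_polar_hilbert_nbhd p x : compact G -> interior G 0 -> 0 <= alpha ->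
  polar K p -> polar K x ->
  hilbert_dist (polar Gplus) p x <= hilbert_dist (polar G) p x + 2 * alpha.
Proof.
move=> cG iG0 a0 Kp Kx.
have [->|px] := eqVneq p x; first by rewrite /hilbert_dist !eqxx add0r mulr_ge0.
have [B B0 HB] := compact_dotp_bounded cK.
have HBG w y : G w -> `|dotp w y| <= B * `|y| by move/GK/interior_subset/HB.
have HBGp w y : Gplus w -> `|dotp w y| <= B * `|y| by move=> [/interior_subset/HB].
have [r r0 Hr] : exists2 r : R, 0 < r & forall w, `|w| < r -> G w.
  have [r r0 H] := (interiorP G 0).1 iG0.
  by exists r => // w wr; apply: H; rewrite sub0r normrN.
have HrGp w : `|w| < r -> Gplus w by move/Hr/sub_hilbert_nbhd; apply.
have [dp dp0 Hp] := compact_slack_lb G0 cG GK Kp.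
have [dx dx0 Hx] := compact_slack_lb G0 cG GK Kx.
have E0 : 0 < expR (- (2 * alpha)) := expR_gt0 _.
rewrite (hilbert_dist_polar B0 HBG r0 Hr dp0 Hp dx0 Hx px).
rewrite (hilbert_dist_polar B0 HBGp r0 HrGp (mulr_gt0 E0 dp0) (hilbert_nbhd_slack Kp Hp)
  (mulr_gt0 E0 dx0) (hilbert_nbhd_slack Kx Hx) px).
have ln_shift q1 q2 dq1 dq2 : polar K q1 -> polar K q2 -> 0 < dq1 ->
    (forall w, G w -> dq1 <= 1 - dotp w q1) -> 0 < dq2 ->
    (forall w, G w -> dq2 <= 1 - dotp w q2) ->
    ln (inf_slack_ratio G q1 q2) - 2 * alpha <= ln (inf_slack_ratio Gplus q1 q2).
  move=> K1 K2 dq1_0 H1 dq2_0 H2; have h := inf_slack_ratio_hilbert_nbhd a0 K1 K2.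
  have m0 := inf_slack_ratio_gt0 B0 HBG r0 Hr dq1_0 H1 dq2_0 H2.
  have mp0 := lt_le_trans (mulr_gt0 E0 m0) h.
  by move: h; rewrite -ler_ln ?posrE ?mulr_gt0 // lnM ?posrE // expRK; lra.
have := ln_shift _ _ _ _ Kp Kx dp0 Hp dx0 Hx.
have := ln_shift _ _ _ _ Kx Kp dx0 Hx dp0 Hp.
lra.
Qed.

End HilbertNbhd.

Theorem lemma4p4 (R : realType) (d : nat) (G K : set 'rV[R]_d) (alpha : R) :
  convex_body G -> convex_body K ->
  interior G 0 -> G `<=` interior K -> 0 < alpha ->
  let Gplus := [set y | interior K y /\
                  inf [set hilbert_dist K y g | g in G] <= alpha] in
  forall p x, polar K p -> polar K x ->
    hilbert_dist (polar Gplus) p x <= hilbert_dist (polar G) p x + 2 * alpha /\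
    (hilbert_dist (polar G) p x <= alpha ->
       hilbert_dist (polar Gplus) p x <= 3 * alpha).
Proof.
move=> [_ [cG _]] [cvK [cK _]] iG0 GK a_gt0 Gplus p x Kp Kx.
have G0 : G !=set0 by exists 0; exact: interior_subset.
have le_shift : hilbert_dist (polar Gplus) p x <= hilbert_dist (polar G) p x + 2 * alpha.
  exact: hilbert_dist_polar_hilbert_nbhd cvK cK G0 GK p x cG iG0 (ltW a_gt0) Kp Kx.
by split => // h; lra.
Qed.
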